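(* There exists a constant $C_{\rm lip}>0$, depending only on the shape-regularity of the family $\{\mathcal{T}_h\}_{h>0}$ and on $p$ (in particular independent of $h$ and of $\gamma_0$), such that for all $v_h,w_h,z_h\in\mathcal{V}_h$, $$|d_h(v_h;v_h,z_h)-d_h(w_h;w_h,z_h)|\le C_{\rm lip}\,\gamma_0\,h\,|v_h-w_h|_{1,\Omega}\,|z_h|_{1,\Omega}.$$
   Context: Let $\Omega\subset\mathbb{R}^2$ be an open bounded polygonal domain with Lipschitz boundary and $\{\mathcal{T}_h\}_{h>0}$ a shape-regular family of conforming triangulations of $\Omega$ into triangles $K$, $h_K=\mathrm{diam}(K)$, $h=\max_K h_K$, nodes $x_1,\dots,x_N$. $\mathcal{V}_h=\{\chi\in H^1(\Omega):\chi|_K\in\mathbb{P}_1(K)\ \forall K\}$. $\mathcal{E}_h$ is the set of interior edges; for $E\in\mathcal{E}_h$, $h_E=|E|$, $\mathbf t$ a fixed unit tangent vector on $E$ and $\partial_{\mathbf t}$ the tangential derivative. For a node $x_i$, $S_i=\{j\neq i: x_j\text{ shares an interior edge with }x_i\}$. For $w_h\in\mathcal{V}_h$, $\xi_{w_h}\in\mathcal{V}_h$ has nodal values $\xi_{w_h}(x_i)=\big|\sum_{j\in S_i}(w_h(x_i)-w_h(x_j))\big|\big/\sum_{j\in S_i}|w_h(x_i)-w_h(x_j)|$ if the denominator is nonzero and $0$ otherwise. Fix $p\in[1,\infty)$ and $\gamma_0>0$; $\alpha_E(w_h):=\max_{x\in E}[\xi_{w_h}(x)]^p$, and $$d_h(w_h;u_h,v_h)=\sum_{E\in\mathcal{E}_h}\gamma_0\,h_E^2\,\alpha_E(w_h)\int_E\partial_{\mathbf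 t}u_h\,\partial_{\mathbf t}v_h\,ds.$$ $|\cdot|_{1,\Omega}$ is the $H^1(\Omega)$ seminorm. *)

From Stdlib Require Import Reals Lra List Classical ClassicalEpsilon.
Import ListNotations.
Open Scope R_scope.

Definition pt2 := (R * R)%type.

Definition cdec (P : Prop) : bool :=
  if excluded_middle_informative P then true else false.

Definition lsum {A : Type} (f : A -> R) (l : list A) : R :=
  fold_right (fun a s => f a + s) 0 l.

Definition nsum (N : nat) (f : nat -> R) : R := lsum f (seq 0 N).

Definition dist2 (x y : pt2) : R :=
  sqrt ((fst x - fst y) ^ 2 + (snd x - snd y) ^ 2).

Definition is_open (U : pt2 -> Prop) : Prop :=
  forall x, U x -> exists r, 0 < r /\ forall y, dist2 x y < r -> U y.

Definition closure (U : pt2 -> Prop) (x : pt2) : Prop :=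
  forall r, 0 < r -> exists y, U y /\ dist2 x y < r.

Definition bdry (U : pt2 -> Prop) (x : pt2) : Prop := closure U x /\ ~ U x.

Definition is_connected (U : pt2 -> Prop) : Prop :=
  forall A B : pt2 -> Prop, is_open A -> is_open B ->
    (forall x, U x -> A x \/ B x) ->
    (forall x, U x -> A x -> B x -> False) ->
    (exists x, U x /\ A x) -> (exists x, U x /\ B x) -> False.

(* Lipschitz boundary: near each boundary point, in a rotated frame,
   U is locally the subgraph of a Lipschitz function. *)
Definition lipschitz_boundary (U : pt2 -> Prop) : Prop :=
  forall x, bdry U x ->
    exists (th r a L : R) (g : R -> R),
      0 < r /\ 0 < a /\ 0 <= L /\ g 0 = 0 /\
      (forall s t, Rabs (g s - g t) <= L * Rabs (s - t)) /\
      forall y1 y2, Rabs y1 < r -> Rabs y2 < a ->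
        (U (fst x + y1 * cos th - y2 * sin th,
            snd x + y1 * sin th + y2 * cos th) <-> y2 < g y1).

(* ---------- mesh data ----------
   N nodes with coordinates pt 0 .. pt (N-1); triangles are triples of
   node indices (listed with increasing indices). *)
Definition tri := (nat * nat * nat)%type.
Definition tv1 (t : tri) : nat := fst (fst t).
Definition tv2 (t : tri) : nat := snd (fst t).
Definition tv3 (t : tri) : nat := snd t.
Definition tverts (t : tri) : list nat := [tv1 t; tv2 t; tv3 t].

Definition tdet (pt : nat -> pt2) (t : tri) : R :=
  let a := pt (tv1 t) in let b := pt (tv2 t) in let c := pt (tv3 t) in
  (fst b - fst a) * (snd c - snd a) - (fst c - fst a) * (snd b - snd a).

Definition tarea (pt : nat -> pt2) (t : tri) : R := Rabs (tdet pt t) / 2.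

Definition elen (pt : nat -> pt2) (a b : nat) : R := dist2 (pt a) (pt b).

Definition tdiam (pt : nat -> pt2) (t : tri) : R :=
  Rmax (elen pt (tv1 t) (tv2 t)) (Rmax (elen pt (tv2 t) (tv3 t)) (elen pt (tv1 t) (tv3 t))).

Definition tinradius (pt : nat -> pt2) (t : tri) : R :=
  2 * tarea pt t / (elen pt (tv1 t) (tv2 t) + elen pt (tv2 t) (tv3 t) + elen pt (tv1 t) (tv3 t)).

Definition hmax (pt : nat -> pt2) (tris : list tri) : R :=
  fold_right (fun t m => Rmax (tdiam pt t) m) 0 tris.

Definition in_tri (pt : nat -> pt2) (t : tri) (x : pt2) : Prop :=
  exists l1 l2 l3, 0 <= l1 /\ 0 <= l2 /\ 0 <= l3 /\ l1 + l2 + l3 = 1 /\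
    x = (l1 * fst (pt (tv1 t)) + l2 * fst (pt (tv2 t)) + l3 * fst (pt (tv3 t)),
         l1 * snd (pt (tv1 t)) + l2 * snd (pt (tv2 t)) + l3 * snd (pt (tv3 t))).

(* convex hull of the points of a finite list of nodes (empty if list empty) *)
Definition in_hull (pt : nat -> pt2) (l : list nat) (x : pt2) : Prop :=
  exists lam : nat -> R,
    (forall i, 0 <= lam i) /\
    lsum lam (seq 0 (length l)) = 1 /\
    x = (lsum (fun i => lam i * fst (pt (nth i l 0%nat))) (seq 0 (length l)),
         lsum (fun i => lam i * snd (pt (nth i l 0%nat))) (seq 0 (length l))).

Definition common_verts (t t' : tri) : list nat :=
  filter (fun i => existsb (Nat.eqb i) (tverts t')) (tverts t).

Definition conforming_triangulation (N : nat) (pt : nat -> pt2) (tris : list tri)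
  (Om : pt2 -> Prop) : Prop :=
  is_open Om /\ is_connected Om /\ (exists x, Om x) /\ lipschitz_boundary Om /\
  (forall t, In t tris ->
     (tv1 t < tv2 t)%nat /\ (tv2 t < tv3 t)%nat /\ (tv3 t < N)%nat /\ tdet pt t <> 0) /\
  NoDup tris /\
  (forall i j, (i < N)%nat -> (j < N)%nat -> pt i = pt j -> i = j) /\
  (forall i, (i < N)%nat -> exists t, In t tris /\ In i (tverts t)) /\
  (forall x, closure Om x <-> exists t, In t tris /\ in_tri pt t x) /\
  (* conformity: two distinct triangles meet in a common vertex, a common
     edge, or not at all *)
  (forall t t' x, In t tris -> In t' tris -> t <> t' ->
     in_tri pt t x -> in_tri pt t' x -> in_hull pt (common_verts t t') x).

Definition shape_regular (sigma : R) (pt : nat -> pt2) (tris : list tri) : Prop :=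
  forall t, In t tris -> tdiam pt t <= sigma * tinradius pt t.

Definition is_edge (tris : list tri) (a b : nat) : Prop :=
  a <> b /\ exists t, In t tris /\ In a (tverts t) /\ In b (tverts t).

(* interior edge E = [x_a, x_b] (a < b, each edge counted once):
   an edge of the mesh whose relative interior lies in Om (E not on the boundary) *)
Definition interior_edge (pt : nat -> pt2) (tris : list tri) (Om : pt2 -> Prop)
  (a b : nat) : Prop :=
  (a < b)%nat /\ is_edge tris a b /\
  forall s, 0 < s < 1 ->
    Om ((1 - s) * fst (pt a) + s * fst (pt b), (1 - s) * snd (pt a) + s * snd (pt b)).

Definition in_S (pt : nat -> pt2) (tris : list tri) (Om : pt2 -> Prop) (i j : nat) : Prop :=
  j <> i /\ (interior_edge pt tris Om i j \/ interior_edge pt tris Om j i).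

(* ---------- the discrete functions (elements of V_h via nodal values) ---------- *)

Definition xi (N : nat) (pt : nat -> pt2) (tris : list tri) (Om : pt2 -> Prop)
  (w : nat -> R) (i : nat) : R :=
  let S j := cdec (in_S pt tris Om i j) in
  let den := nsum N (fun j => if S j then Rabs (w i - w j) else 0) in
  let num := Rabs (nsum N (fun j => if S j then w i - w j else 0)) in
  if cdec (den = 0) then 0 else num / den.

(* x ^ p for x >= 0, p >= 1 (0 ^ p = 0) *)
Definition rpow (x p : R) : R := if Rlt_dec 0 x then Rpower x p else 0.

(* alpha_E(w) = max_{x in E} xi(x)^p ; xi is affine along E and t |-> t^p is
   increasing on [0,inf), so the max is attained at an endpoint of E *)
Definition alphaE (N : nat) (pt : nat -> pt2) (tris : list tri) (Om : pt2 -> Prop)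
  (p : R) (w : nat -> R) (a b : nat) : R :=
  Rmax (rpow (xi N pt tris Om w a) p) (rpow (xi N pt tris Om w b) p).

(* int_E d_t u d_t v ds for P1 u, v:  (d_t u constant = (u_b-u_a)/h_E) *)
Definition edge_int (pt : nat -> pt2) (u v : nat -> R) (a b : nat) : R :=
  (u b - u a) / elen pt a b * ((v b - v a) / elen pt a b) * elen pt a b.

Definition d_h (N : nat) (pt : nat -> pt2) (tris : list tri) (Om : pt2 -> Prop)
  (p gamma0 : R) (w u v : nat -> R) : R :=
  nsum N (fun a => nsum N (fun b =>
    if cdec (interior_edge pt tris Om a b) then
      gamma0 * (elen pt a b) ^ 2 * alphaE N pt tris Om p w a b * edge_int pt u v a b
    else 0)).

(* constant gradient of the P1 interpolant of nodal values v on triangle t *)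
Definition gradx (pt : nat -> pt2) (v : nat -> R) (t : tri) : R :=
  let a := pt (tv1 t) in let b := pt (tv2 t) in let c := pt (tv3 t) in
  ((v (tv2 t) - v (tv1 t)) * (snd c - snd a) - (v (tv3 t) - v (tv1 t)) * (snd b - snd a))
  / tdet pt t.
Definition grady (pt : nat -> pt2) (v : nat -> R) (t : tri) : R :=
  let a := pt (tv1 t) in let b := pt (tv2 t) in let c := pt (tv3 t) in
  ((fst b - fst a) * (v (tv3 t) - v (tv1 t)) - (fst c - fst a) * (v (tv2 t) - v (tv1 t)))
  / tdet pt t.

Definition h1semi (pt : nat -> pt2) (tris : list tri) (v : nat -> R) : R :=
  sqrt (lsum (fun t => tarea pt t * (gradx pt v t ^ 2 + grady pt v t ^ 2)) tris).

From Stdlib Require Import Reals List Lra Psatz Lia ZArith Classical ClassicalEpsilon.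
Open Scope R_scope.

(* On an interior edge E = [x_a, x_b] the summand of d_h(w; w, z) is
   gamma0 h_E alpha_E(w) (w_b - w_a) (z_b - z_a).  The indicator xi_w(x_a) is a ratio
   |sum_j d_j| / sum_j |d_j| <= 1 whose numerator and denominator are 1-Lipschitz in the
   differences d_j = w_a - w_j, and |w_b - w_a| is one of the terms of the denominator.
   With the Lipschitz constant p of t |-> t^p on [0, 1] this gives
     |alpha_E(v) (v_b - v_a) - alpha_E(w) (w_b - w_a)| <= (2p + 1) (eps_a + eps_b),
   where eps_a = sum_{j in S_a} |(v - w)_a - (v - w)_j|.  Summing over edges, h_E <= h and
   Cauchy-Schwarz reduce the claim to sum_a eps_a^2 <= C |v - w|_1^2, which follows from
   (e_b - e_a)^2 <= h_K^2 |grad e|_K^2 <= 2 sigma |K| |grad e|_K^2 once the number of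
   triangles at a node is bounded in terms of sigma alone: every triangle at x_a contains,
   in its open angle at x_a, a direction from a fixed grid of mesh size 1/(4 sigma), and
   conformity forbids two triangles at x_a from sharing such a direction. *)

(** * Finite sums and indicators *)

Lemma Cauchy_Schwarz_step (f g fg ff gg : R) : 0 <= ff -> 0 <= gg ->
  fg ^ 2 <= ff * gg -> (f * g + fg) ^ 2 <= (f ^ 2 + ff) * (g ^ 2 + gg).
Proof.
  intros Hff Hgg H.
  assert (Hsq : (2 * f * g * fg)² <= (f ^ 2 * gg + g ^ 2 * ff)²).
  { assert (0 <= f ^ 2 * g ^ 2 * (ff * gg - fg ^ 2)) by (apply Rmult_le_pos; nra).
    assert (0 <= (f ^ 2 * gg - g ^ 2 * ff) ^ 2) by apply pow2_ge_0.
    unfold Rsqr. nra. }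
  apply Rsqr_incr_0_var in Hsq; nra.
Qed.

Section ListSums.
Context {A : Type}.

Lemma lsum_ext (f g : A -> R) l : (forall x, In x l -> f x = g x) -> lsum f l = lsum g l.
Proof. induction l as [|a l IH]; simpl; intros H; auto. rewrite H, IH; auto. Qed.

Lemma lsum_le (f g : A -> R) l : (forall x, In x l -> f x <= g x) -> lsum f l <= lsum g l.
Proof.
  induction l as [|a l IH]; simpl; intros H; [lra|].
  specialize (IH (fun x h => H x (or_intror h))). specialize (H a (or_introl eq_refl)). lra.
Qed.

Lemma lsum_const0 l : lsum (fun _ : A => 0) l = 0.
Proof. induction l as [|a l IH]; simpl; [|rewrite IH]; ring. Qed.

Lemma lsum_const (c : R) (l : list A) : lsum (fun _ => c) l = c * INR (length l).
Proof.
  induction l as [|a l IH]; simpl length; [simpl; ring|].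
  rewrite S_INR. simpl. rewrite IH. ring.
Qed.

Lemma lsum_nonneg (f : A -> R) l : (forall x, In x l -> 0 <= f x) -> 0 <= lsum f l.
Proof. intros H. rewrite <- (lsum_const0 l). apply lsum_le, H. Qed.

Lemma lsum_plus (f g : A -> R) l : lsum (fun x => f x + g x) l = lsum f l + lsum g l.
Proof. induction l as [|a l IH]; simpl; [|rewrite IH]; ring. Qed.

Lemma lsum_minus (f g : A -> R) l : lsum (fun x => f x - g x) l = lsum f l - lsum g l.
Proof. induction l as [|a l IH]; simpl; [|rewrite IH]; ring. Qed.

Lemma lsum_scal (c : R) (f : A -> R) l : lsum (fun x => c * f x) l = c * lsum f l.
Proof. induction l as [|a l IH]; simpl; [|rewrite IH]; ring. Qed.

Lemma lsum_abs (f : A -> R) l : Rabs (lsum f l) <= lsum (fun x => Rabs (f x)) l.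
Proof.
  induction l as [|a l IH]; simpl; [rewrite Rabs_R0; lra|].
  eapply Rle_trans; [apply Rabs_triang | lra].
Qed.

Lemma lsum_ge_term (f : A -> R) l x : In x l -> (forall y, In y l -> 0 <= f y) ->
  f x <= lsum f l.
Proof.
  induction l as [|a l IH]; simpl; intros Hx H; [contradiction|].
  assert (0 <= f a) by auto.
  assert (0 <= lsum f l) by (apply lsum_nonneg; auto).
  destruct Hx as [->|Hx]; [lra|].
  specialize (IH Hx (fun y h => H y (or_intror h))). lra.
Qed.

Lemma lsum_Cauchy_Schwarz (f g : A -> R) l :
  (lsum (fun x => f x * g x) l) ^ 2 <= lsum (fun x => f x ^ 2) l * lsum (fun x => g x ^ 2) l.
Proof.
  induction l as [|a l IH]; simpl; [lra|].
  apply Cauchy_Schwarz_step; auto; apply lsum_nonneg; intros; apply pow2_ge_0.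
Qed.

Lemma lsum_Cauchy_Schwarz_sqrt (f g : A -> R) l :
  lsum (fun x => f x * g x) l
  <= sqrt (lsum (fun x => f x ^ 2) l) * sqrt (lsum (fun x => g x ^ 2) l).
Proof.
  rewrite <- sqrt_mult by (apply lsum_nonneg; intros; apply pow2_ge_0).
  eapply Rle_trans; [apply Rle_abs|].
  rewrite <- sqrt_pow2 with (Rabs _) by apply Rabs_pos.
  apply sqrt_le_1_alt. rewrite pow2_abs. apply lsum_Cauchy_Schwarz.
Qed.

End ListSums.

Lemma lsum_comm {A B : Type} (f : A -> B -> R) (la : list A) (lb : list B) :
  lsum (fun a => lsum (fun b => f a b) lb) la = lsum (fun b => lsum (fun a => f a b) la) lb.
Proof.
  induction la as [|a la IH]; simpl; [now rewrite lsum_const0|].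
  rewrite IH, <- lsum_plus. reflexivity.
Qed.

Lemma cdecP (P : Prop) : reflect P (cdec P).
Proof. unfold cdec. destruct (excluded_middle_informative P); constructor; auto. Qed.

Definition ind (P : Prop) : R := if cdec P then 1 else 0.

Lemma ind_true (P : Prop) : P -> ind P = 1.
Proof. unfold ind. destruct (cdecP P); tauto. Qed.

Lemma ind_false (P : Prop) : ~ P -> ind P = 0.
Proof. unfold ind. destruct (cdecP P); tauto. Qed.

Lemma ind_bounds (P : Prop) : 0 <= ind P <= 1.
Proof. unfold ind. destruct (cdec P); lra. Qed.

Lemma ind_idem (P : Prop) : ind P * ind P = ind P.
Proof. unfold ind. destruct (cdec P); ring. Qed.

Lemma ind_sq (P : Prop) : ind P ^ 2 = ind P.
Proof. unfold ind. destruct (cdec P); ring. Qed.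

Lemma lsum_ind_le_1 {A : Type} (P : A -> Prop) (l : list A) : NoDup l ->
  (forall x y, In x l -> In y l -> P x -> P y -> x = y) ->
  lsum (fun x => ind (P x)) l <= 1.
Proof.
  induction l as [|a l IH]; simpl; intros Hnd Huniq; [lra|].
  apply NoDup_cons_iff in Hnd as [Ha Hnd].
  destruct (classic (P a)) as [HPa|HPa].
  - rewrite ind_true by auto. rewrite (lsum_ext _ (fun _ => 0)), lsum_const0; [lra|].
    intros x Hx. apply ind_false. intros HPx.
    assert (x = a) by (apply Huniq; auto). subst. contradiction.
  - rewrite ind_false by auto. rewrite Rplus_0_l. apply IH; auto.
Qed.

Lemma lsum_ind_pigeonhole {A B : Type} (P : A -> Prop) (Q : A -> B -> Prop)
  (l : list A) (G : list B) : NoDup l ->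
  (forall x, In x l -> P x -> exists g, In g G /\ Q x g) ->
  (forall x y g, In x l -> In y l -> P x -> P y -> Q x g -> Q y g -> x = y) ->
  lsum (fun x => ind (P x)) l <= INR (length G).
Proof.
  intros Hnd Hex Huniq.
  apply Rle_trans with (lsum (fun x => lsum (fun g => ind (P x /\ Q x g)) G) l).
  - apply lsum_le. intros x Hx. destruct (classic (P x)) as [HP|HP].
    + destruct (Hex x Hx HP) as [g [Hg HQ]]. rewrite ind_true by auto.
      rewrite <- (ind_true (P x /\ Q x g)) by auto.
      apply lsum_ge_term with (f := fun g => ind (P x /\ Q x g)); auto.
      intros; apply ind_bounds.
    + rewrite ind_false by auto. apply lsum_nonneg. intros; apply ind_bounds.
  - rewrite lsum_comm, <- (Rmult_1_l (INR _)), <- lsum_const. apply lsum_le. intros g _.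
    apply lsum_ind_le_1; auto. intros x y Hx Hy [] []. eauto.
Qed.

(** * Lipschitz continuity of the edge weights *)

Lemma Rpower_le_1 (x q : R) : 0 < x <= 1 -> 0 <= q -> Rpower x q <= 1.
Proof.
  intros Hx Hq. apply Rle_trans with (Rpower 1 q).
  - apply Rle_Rpower_l; lra.
  - unfold Rpower. rewrite ln_1, Rmult_0_r, exp_0. lra.
Qed.

Lemma Rpower_le_self (x p : R) : 0 < x <= 1 -> 1 <= p -> Rpower x p <= x.
Proof.
  intros Hx Hp. replace p with ((p - 1) + 1) by ring.
  rewrite Rpower_plus, Rpower_1 by lra.
  assert (Rpower x (p - 1) <= 1) by (apply Rpower_le_1; lra). nra.
Qed.

Lemma rpow_bounds (x p : R) : 0 <= x <= 1 -> 1 <= p -> 0 <= rpow x p <= 1.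
Proof.
  intros Hx Hp. unfold rpow. destruct (Rlt_dec 0 x); [|lra].
  split; [left; apply exp_pos | apply Rpower_le_1; lra].
Qed.

(* The derivative p x^(p-1) of x |-> x^p is at most p on (0, 1]. *)
Lemma rpow_incr_lipschitz (x y p : R) : 0 <= y <= x -> x <= 1 -> 1 <= p ->
  0 <= rpow x p - rpow y p <= p * (x - y).
Proof.
  intros Hyx Hx Hp. unfold rpow.
  destruct (Rlt_dec 0 y) as [Hy|Hy]; destruct (Rlt_dec 0 x) as [Hx0|Hx0]; try lra.
  - split; [assert (Rpower y p <= Rpower x p) by (apply Rle_Rpower_l; lra); lra|].
    destruct (Req_dec x y) as [->|Hne]; [lra|].
    destruct (MVT_cor2 (fun t => Rpower t p) (fun t => p * Rpower t (p - 1)) y x)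
      as [c [-> Hc]]; [lra | intros c Hc; apply derivable_pt_lim_power; lra |].
    assert (Rpower c (p - 1) <= 1) by (apply Rpower_le_1; lra).
    apply Rmult_le_compat_r; nra.
  - assert (Rpower x p <= x) by (apply Rpower_le_self; lra).
    assert (0 < Rpower x p) by apply exp_pos. nra.
  - nra.
Qed.

Lemma rpow_lipschitz (x y p : R) : 0 <= x <= 1 -> 0 <= y <= 1 -> 1 <= p ->
  Rabs (rpow x p - rpow y p) <= p * Rabs (x - y).
Proof.
  intros Hx Hy Hp. destruct (Rle_dec y x).
  - pose proof (rpow_incr_lipschitz x y p ltac:(lra) ltac:(lra) Hp).
    rewrite !Rabs_right by lra. lra.
  - pose proof (rpow_incr_lipschitz y x p ltac:(lra) ltac:(lra) Hp).
    rewrite !Rabs_left1 by lra. lra.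
Qed.

Section SumRatio.
Variables (l : list nat) (s : nat -> bool).

Definition sum_abs_on (d : nat -> R) : R := lsum (fun j => if s j then Rabs (d j) else 0) l.
Definition abs_sum_on (d : nat -> R) : R := Rabs (lsum (fun j => if s j then d j else 0) l).
Definition sum_ratio (d : nat -> R) : R :=
  if cdec (sum_abs_on d = 0) then 0 else abs_sum_on d / sum_abs_on d.

Lemma sum_abs_on_nonneg d : 0 <= sum_abs_on d.
Proof. apply lsum_nonneg. intros j _. destruct (s j); [apply Rabs_pos | lra]. Qed.

Lemma sum_abs_on_ge_term d j : In j l -> s j = true -> Rabs (d j) <= sum_abs_on d.
Proof.
  intros Hj Hs. unfold sum_abs_on.
  apply lsum_ge_term with (f := fun j => if s j then Rabs (d j) else 0) in Hj;
    [now rewrite Hs in Hj|].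
  intros y _. destruct (s y); [apply Rabs_pos | lra].
Qed.

Lemma abs_sum_on_le d : abs_sum_on d <= sum_abs_on d.
Proof.
  eapply Rle_trans; [apply lsum_abs|]. apply lsum_le. intros j _.
  destruct (s j); [lra | rewrite Rabs_R0; lra].
Qed.

Lemma sum_ratio_bounds d : 0 <= sum_ratio d <= 1.
Proof.
  unfold sum_ratio. destruct (cdecP (sum_abs_on d = 0)); [lra|].
  pose proof (sum_abs_on_nonneg d). pose proof (abs_sum_on_le d).
  assert (0 <= abs_sum_on d) by apply Rabs_pos.
  split; [apply Rle_mult_inv_pos; lra|].
  apply Rmult_le_reg_r with (sum_abs_on d); [lra|]. unfold Rdiv. rewrite Rmult_assoc, Rinv_l; lra.
Qed.

Lemma sum_abs_on_lipschitz d d' :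
  Rabs (sum_abs_on d - sum_abs_on d') <= sum_abs_on (fun j => d j - d' j).
Proof.
  unfold sum_abs_on. rewrite <- lsum_minus.
  eapply Rle_trans; [apply lsum_abs|]. apply lsum_le. intros j _.
  destruct (s j); [apply Rabs_triang_inv2 | rewrite Rminus_0_r, Rabs_R0; lra].
Qed.

Lemma abs_sum_on_lipschitz d d' :
  Rabs (abs_sum_on d - abs_sum_on d') <= sum_abs_on (fun j => d j - d' j).
Proof.
  eapply Rle_trans; [apply Rabs_triang_inv2|].
  rewrite <- lsum_minus. eapply Rle_trans; [apply lsum_abs|]. apply lsum_le. intros j _.
  destruct (s j); [lra | rewrite Rminus_0_r, Rabs_R0; lra].
Qed.

Lemma sum_ratio_lipschitz d d' : 0 < sum_abs_on d ->
  Rabs (sum_ratio d - sum_ratio d') * sum_abs_on d <= 2 * sum_abs_on (fun j => d j - d' j).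
Proof.
  intros HD.
  pose proof (sum_abs_on_lipschitz d d') as HlipD.
  pose proof (abs_sum_on_lipschitz d d') as HlipN.
  pose proof (abs_sum_on_le d'). pose proof (sum_abs_on_nonneg (fun j => d j - d' j)).
  assert (0 <= abs_sum_on d) by apply Rabs_pos.
  assert (0 <= abs_sum_on d') by apply Rabs_pos.
  unfold sum_ratio. destruct (cdecP (sum_abs_on d = 0)); [lra|].
  destruct (cdecP (sum_abs_on d' = 0)) as [HD'|HD'].
  - rewrite Rminus_0_r, Rabs_right by (apply Rle_ge, Rle_mult_inv_pos; lra).
    replace (abs_sum_on d / sum_abs_on d * sum_abs_on d) with (abs_sum_on d) by (field; lra).
    rewrite HD' in *. rewrite Rabs_right in HlipN; lra.
  - pose proof (sum_abs_on_nonneg d').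
    set (D := sum_abs_on d) in *. set (D' := sum_abs_on d') in *.
    set (Nm := abs_sum_on d) in *. set (Nm' := abs_sum_on d') in *.
    replace (Rabs (Nm / D - Nm' / D') * D) with (Rabs ((Nm / D - Nm' / D') * D))
      by (rewrite Rabs_mult, (Rabs_right D); lra).
    replace ((Nm / D - Nm' / D') * D) with ((Nm - Nm') + Nm' / D' * (D' - D)) by (field; lra).
    eapply Rle_trans; [apply Rabs_triang|]. rewrite Rabs_mult, (Rabs_minus_sym D').
    assert (Rabs (Nm' / D') <= 1).
    { rewrite Rabs_right by (apply Rle_ge, Rle_mult_inv_pos; lra).
      apply Rmult_le_reg_r with D'; [lra|]. unfold Rdiv. rewrite Rmult_assoc, Rinv_l; lra. }
    assert (Rabs (Nm' / D') * Rabs (D - D') <= Rabs (D - D'))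
      by (pose proof (Rabs_pos (D - D')); pose proof (Rabs_pos (Nm' / D')); nra).
    lra.
Qed.

End SumRatio.

Section Stars.
Variables (N : nat) (pt : nat -> pt2) (tris : list tri) (Om : pt2 -> Prop).

Let star_sel (a : nat) : nat -> bool := fun j => cdec (in_S pt tris Om a j).

Definition star_var (y : nat -> R) (a : nat) : R :=
  nsum N (fun b => ind (in_S pt tris Om a b) * Rabs (y a - y b)).

Lemma star_var_nonneg y a : 0 <= star_var y a.
Proof.
  apply lsum_nonneg. intros b _.
  apply Rmult_le_pos; [apply ind_bounds | apply Rabs_pos].
Qed.

Lemma star_var_eq_sum_abs_on (v w : nat -> R) a :
  star_var (fun i => v i - w i) a
  = sum_abs_on (seq 0 N) (star_sel a) (fun j => (v a - v j) - (w a - w j)).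
Proof.
  apply lsum_ext. intros j _. unfold ind, star_sel.
  destruct (cdec _); [rewrite Rmult_1_l; f_equal | ]; ring.
Qed.

Lemma star_var_ge_term (y : nat -> R) a b : (b < N)%nat -> in_S pt tris Om a b ->
  Rabs (y a - y b) <= star_var y a.
Proof.
  intros Hb HS. rewrite <- (Rmult_1_l (Rabs _)), <- (ind_true _ HS).
  apply lsum_ge_term with (f := fun b => ind (in_S pt tris Om a b) * Rabs (y a - y b)).
  - apply in_seq. lia.
  - intros j _. apply Rmult_le_pos; [apply ind_bounds | apply Rabs_pos].
Qed.

Variable p : R.
Hypothesis Hp : 1 <= p.

Lemma rpow_xi_bounds u a : 0 <= rpow (xi N pt tris Om u a) p <= 1.
Proof. apply rpow_bounds; [apply sum_ratio_bounds | exact Hp]. Qed.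

(* |v_b - v_a| is one of the terms of the denominator of xi_v(x_a). *)
Lemma rpow_xi_lipschitz (v w : nat -> R) a b : (b < N)%nat -> in_S pt tris Om a b ->
  Rabs (rpow (xi N pt tris Om v a) p - rpow (xi N pt tris Om w a) p) * Rabs (v b - v a)
  <= 2 * p * star_var (fun i => v i - w i) a.
Proof.
  intros Hb HS.
  set (dv := fun j => v a - v j). set (dw := fun j => w a - w j).
  set (D := sum_abs_on (seq 0 N) (star_sel a) dv).
  assert (HvD : Rabs (v b - v a) <= D).
  { rewrite Rabs_minus_sym. apply (sum_abs_on_ge_term _ _ dv b).
    - apply in_seq. lia.
    - unfold star_sel. now destruct (cdecP (in_S pt tris Om a b)). }
  pose proof (rpow_lipschitz _ _ p (sum_ratio_bounds (seq 0 N) (star_sel a) dv)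
                (sum_ratio_bounds (seq 0 N) (star_sel a) dw) Hp) as Hrpow.
  pose proof (star_var_nonneg (fun i => v i - w i) a) as Hvar.
  change (xi N pt tris Om v a) with (sum_ratio (seq 0 N) (star_sel a) dv).
  change (xi N pt tris Om w a) with (sum_ratio (seq 0 N) (star_sel a) dw).
  set (X := Rabs (sum_ratio (seq 0 N) (star_sel a) dv - sum_ratio (seq 0 N) (star_sel a) dw))
    in *.
  set (Y := Rabs (rpow (sum_ratio (seq 0 N) (star_sel a) dv) p
                  - rpow (sum_ratio (seq 0 N) (star_sel a) dw) p)) in *.
  assert (0 <= Y) by apply Rabs_pos. assert (0 <= X) by apply Rabs_pos.
  destruct (Req_dec D 0) as [HD0|HD0].
  - assert (Hvab : Rabs (v b - v a) = 0) by (pose proof (Rabs_pos (v b - v a)); lra).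
    rewrite Hvab, Rmult_0_r. nra.
  - assert (HDpos : 0 < D).
    { assert (0 <= D) by apply sum_abs_on_nonneg. lra. }
    pose proof (sum_ratio_lipschitz (seq 0 N) (star_sel a) dv dw HDpos) as Hratio.
    replace (sum_abs_on (seq 0 N) (star_sel a) (fun j => dv j - dw j))
      with (star_var (fun i => v i - w i) a) in Hratio by apply star_var_eq_sum_abs_on.
    change (X * D <= 2 * star_var (fun i => v i - w i) a) in Hratio.
    apply Rle_trans with (Y * D); [apply Rmult_le_compat_l; lra|].
    apply Rle_trans with (p * X * D); [apply Rmult_le_compat_r; lra | nra].
Qed.

Lemma Rmax_lipschitz x y x' y' : Rabs (Rmax x y - Rmax x' y') <= Rabs (x - x') + Rabs (y - y').
Proof.
  unfold Rmax. destruct (Rle_dec x y), (Rle_dec x' y'); unfold Rabs;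
    repeat destruct (Rcase_abs _); lra.
Qed.

Lemma alphaE_lipschitz (v w : nat -> R) a b : (a < N)%nat -> (b < N)%nat ->
  in_S pt tris Om a b -> in_S pt tris Om b a ->
  Rabs (alphaE N pt tris Om p v a b * (v b - v a) - alphaE N pt tris Om p w a b * (w b - w a))
  <= (2 * p + 1) * (star_var (fun i => v i - w i) a + star_var (fun i => v i - w i) b).
Proof.
  intros Ha Hb Hab Hba.
  pose proof (rpow_xi_lipschitz v w a b Hb Hab) as Hlip_a.
  pose proof (rpow_xi_lipschitz v w b a Ha Hba) as Hlip_b.
  rewrite (Rabs_minus_sym (v a)) in Hlip_b.
  pose proof (star_var_ge_term (fun i => v i - w i) a b Hb Hab) as Hdiff.
  pose proof (star_var_nonneg (fun i => v i - w i) a).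
  pose proof (star_var_nonneg (fun i => v i - w i) b).
  unfold alphaE.
  set (Av := Rmax (rpow (xi N pt tris Om v a) p) (rpow (xi N pt tris Om v b) p)).
  set (Aw := Rmax (rpow (xi N pt tris Om w a) p) (rpow (xi N pt tris Om w b) p)).
  replace (Av * (v b - v a) - Aw * (w b - w a))
    with ((Av - Aw) * (v b - v a) + Aw * ((v b - v a) - (w b - w a))) by ring.
  eapply Rle_trans; [apply Rabs_triang|]. rewrite !Rabs_mult.
  assert (HAw : Rabs Aw <= 1).
  { pose proof (rpow_xi_bounds w a). pose proof (rpow_xi_bounds w b).
    unfold Aw, Rmax. destruct (Rle_dec _ _); rewrite Rabs_right; lra. }
  assert (Rabs Aw * Rabs (v b - v a - (w b - w a)) <= star_var (fun i => v i - w i) a).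
  { replace (v b - v a - (w b - w a)) with (- ((v a - w a) - (v b - w b))) by ring.
    rewrite Rabs_Ropp. pose proof (Rabs_pos Aw). pose proof (Rabs_pos ((v a - w a) - (v b - w b))).
    nra. }
  assert (Rabs (Av - Aw) * Rabs (v b - v a) <=
          2 * p * star_var (fun i => v i - w i) a + 2 * p * star_var (fun i => v i - w i) b).
  { pose proof (Rabs_pos (v b - v a)).
    eapply Rle_trans; [apply Rmult_le_compat_r; [auto | apply Rmax_lipschitz]|].
    rewrite Rmult_plus_distr_r. lra. }
  nra.
Qed.

End Stars.

(** * Geometry of a single triangle *)

Lemma dist2_sym x y : dist2 x y = dist2 y x.
Proof. unfold dist2. f_equal. ring. Qed.

Lemma dist2_nonneg x y : 0 <= dist2 x y.
Proof. apply sqrt_pos. Qed.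

Lemma dist2_refl x : dist2 x x = 0.
Proof. unfold dist2. rewrite !Rminus_diag. simpl. rewrite !Rmult_0_l, Rplus_0_r. apply sqrt_0. Qed.

Lemma dist2_sq x y : dist2 x y ^ 2 = (fst x - fst y) ^ 2 + (snd x - snd y) ^ 2.
Proof. apply pow2_sqrt. apply Rplus_le_le_0_compat; apply pow2_ge_0. Qed.

Lemma dist2_pos x y : x <> y -> 0 < dist2 x y.
Proof.
  intros Hxy. apply sqrt_lt_R0. destruct x as [x1 x2], y as [y1 y2]; simpl.
  assert (Hsq : forall r, r <> 0 -> 0 < r ^ 2)
    by (intros r Hr; pose proof (Rsqr_pos_lt r Hr); unfold Rsqr in *; lra).
  pose proof (pow2_ge_0 (x1 - y1)). pose proof (pow2_ge_0 (x2 - y2)).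
  destruct (Req_dec x1 y1); [destruct (Req_dec x2 y2); [congruence|] |].
  - assert (0 < (x2 - y2) ^ 2) by (apply Hsq; lra). lra.
  - assert (0 < (x1 - y1) ^ 2) by (apply Hsq; lra). lra.
Qed.

Lemma elen_le_diam pt K a b : In a (tverts K) -> In b (tverts K) -> elen pt a b <= tdiam pt K.
Proof.
  pose proof (dist2_nonneg (pt (tv1 K)) (pt (tv2 K))).
  unfold tdiam, elen. simpl. rewrite !Rmax_Rle.
  intros [<-|[<-|[<-|[]]]] [<-|[<-|[<-|[]]]]; rewrite ?dist2_refl; try lra;
    rewrite ?(dist2_sym (pt (tv2 K)) (pt (tv1 K))), ?(dist2_sym (pt (tv3 K)) (pt (tv1 K))),
      ?(dist2_sym (pt (tv3 K)) (pt (tv2 K))); lra.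
Qed.

Lemma hmax_ge pt tris K : In K tris -> tdiam pt K <= hmax pt tris.
Proof.
  induction tris as [|K' tris IH]; simpl; [tauto|]. intros [->|HK]; [apply Rmax_l|].
  eapply Rle_trans; [apply IH, HK | apply Rmax_r].
Qed.

Lemma hmax_nonneg pt tris : 0 <= hmax pt tris.
Proof.
  induction tris as [|K tris IH]; simpl; [lra|].
  eapply Rle_trans; [apply IH | apply Rmax_r].
Qed.

Definition grad_energy (pt : nat -> pt2) (e : nat -> R) (K : tri) : R :=
  tarea pt K * (gradx pt e K ^ 2 + grady pt e K ^ 2).

Lemma grad_energy_nonneg pt e K : 0 <= grad_energy pt e K.
Proof.
  apply Rmult_le_pos; [unfold tarea; pose proof (Rabs_pos (tdet pt K)); lra|].
  apply Rplus_le_le_0_compat; apply pow2_ge_0.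
Qed.

Lemma tarea_pos pt K : tdet pt K <> 0 -> 0 < tarea pt K.
Proof. intros Hd. unfold tarea. pose proof (Rabs_pos_lt _ Hd). lra. Qed.

Lemma grad_vertex_diff pt K (e : nat -> R) c : tdet pt K <> 0 -> In c (tverts K) ->
  e c - e (tv1 K) = gradx pt e K * (fst (pt c) - fst (pt (tv1 K)))
                    + grady pt e K * (snd (pt c) - snd (pt (tv1 K))).
Proof.
  intros Hd Hc. unfold gradx, grady, tdet in *. simpl in Hc.
  destruct Hc as [<-|[<-|[<-|[]]]]; field; auto.
Qed.

Lemma edge_diff_sq_le_grad pt K (e : nat -> R) a b :
  tdet pt K <> 0 -> In a (tverts K) -> In b (tverts K) ->
  (e b - e a) ^ 2 <= (gradx pt e K ^ 2 + grady pt e K ^ 2) * elen pt a b ^ 2.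
Proof.
  intros Hd Ha Hb.
  pose proof (grad_vertex_diff pt K e a Hd Ha). pose proof (grad_vertex_diff pt K e b Hd Hb).
  unfold elen. rewrite dist2_sq.
  replace (e b - e a) with (gradx pt e K * (fst (pt b) - fst (pt a))
                            + grady pt e K * (snd (pt b) - snd (pt a))) by lra.
  set (g1 := gradx pt e K). set (g2 := grady pt e K).
  pose proof (pow2_ge_0 (g1 * (snd (pt b) - snd (pt a)) - g2 * (fst (pt b) - fst (pt a)))).
  nra.
Qed.

(* With perimeter P: h_K^2 <= h_K P <= sigma rho_K P = 2 sigma |K|. *)
Lemma diam_sq_le_area sigma pt K : tdet pt K <> 0 -> tdiam pt K <= sigma * tinradius pt K ->
  tdiam pt K ^ 2 <= 2 * sigma * tarea pt K /\ 0 < sigma.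
Proof.
  intros Hd Hs.
  assert (H12 : 0 < elen pt (tv1 K) (tv2 K)).
  { apply dist2_pos. intros E. apply Hd. unfold tdet. rewrite E. ring. }
  pose proof (dist2_nonneg (pt (tv2 K)) (pt (tv3 K))).
  pose proof (dist2_nonneg (pt (tv1 K)) (pt (tv3 K))).
  pose proof (tarea_pos pt K Hd).
  unfold tinradius in Hs.
  set (P := elen pt (tv1 K) (tv2 K) + elen pt (tv2 K) (tv3 K) + elen pt (tv1 K) (tv3 K)) in *.
  assert (HdP : tdiam pt K <= P).
  { unfold tdiam, P, elen in *. repeat apply Rmax_lub; lra. }
  assert (Hdpos : 0 < tdiam pt K).
  { eapply Rlt_le_trans; [apply H12 | apply elen_le_diam; simpl; auto]. }
  assert (H2 : tdiam pt K * P <= 2 * sigma * tarea pt K).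
  { replace (2 * sigma * tarea pt K) with (sigma * (2 * tarea pt K / P) * P) by (field; lra).
    apply Rmult_le_compat_r; lra. }
  split; nra.
Qed.

Lemma edge_diff_sq_le_energy sigma pt K (e : nat -> R) a b : tdet pt K <> 0 ->
  tdiam pt K <= sigma * tinradius pt K -> In a (tverts K) -> In b (tverts K) ->
  (e b - e a) ^ 2 <= 2 * sigma * grad_energy pt e K.
Proof.
  intros Hd Hs Ha Hb.
  destruct (diam_sq_le_area sigma pt K Hd Hs) as [Hdiam _].
  pose proof (elen_le_diam pt K a b Ha Hb). pose proof (dist2_nonneg (pt a) (pt b)).
  assert (elen pt a b ^ 2 <= tdiam pt K ^ 2) by (apply pow_incr; unfold elen in *; lra).
  assert (0 <= gradx pt e K ^ 2 + grady pt e K ^ 2)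
    by (apply Rplus_le_le_0_compat; apply pow2_ge_0).
  eapply Rle_trans; [apply (edge_diff_sq_le_grad pt K e a b Hd Ha Hb)|].
  unfold grad_energy. nra.
Qed.

(** * Shape regularity bounds the number of triangles at a node *)

Definition sorted_tri (K : tri) : Prop := (tv1 K < tv2 K)%nat /\ (tv2 K < tv3 K)%nat.

(* For a vertex a of a sorted triangle K, the other two vertices in increasing order. *)
Definition other1 (K : tri) (a : nat) : nat := if Nat.eqb a (tv1 K) then tv2 K else tv1 K.
Definition other2 (K : tri) (a : nat) : nat := if Nat.eqb a (tv3 K) then tv2 K else tv3 K.

Definition cross3 (o x y : pt2) : R :=
  (fst x - fst o) * (snd y - snd o) - (fst y - fst o) * (snd x - snd o).

Definition cone_point (o x y : pt2) (al be : R) : pt2 :=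
  (fst o + al * (fst x - fst o) + be * (fst y - fst o),
   snd o + al * (snd x - snd o) + be * (snd y - snd o)).

Definition in_cone (o x y g : pt2) : Prop :=
  exists al be, 0 < al /\ 0 < be /\
    g = (al * (fst x - fst o) + be * (fst y - fst o), al * (snd x - snd o) + be * (snd y - snd o)).

Lemma other_cases K a : sorted_tri K -> In a (tverts K) ->
  (a = tv1 K /\ other1 K a = tv2 K /\ other2 K a = tv3 K) \/
  (a = tv2 K /\ other1 K a = tv1 K /\ other2 K a = tv3 K) \/
  (a = tv3 K /\ other1 K a = tv1 K /\ other2 K a = tv2 K).
Proof.
  unfold sorted_tri, other1, other2. simpl. intros [H12 H23] [<-|[<-|[<-|[]]]].
  - left. rewrite Nat.eqb_refl. destruct (Nat.eqb_spec (tv1 K) (tv3 K)); [lia|]. auto.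
  - right; left. destruct (Nat.eqb_spec (tv2 K) (tv1 K)); [lia|].
    destruct (Nat.eqb_spec (tv2 K) (tv3 K)); [lia|]. auto.
  - right; right. destruct (Nat.eqb_spec (tv3 K) (tv1 K)); [lia|]. rewrite Nat.eqb_refl. auto.
Qed.

Lemma other_verts K a : sorted_tri K -> In a (tverts K) ->
  In (other1 K a) (tverts K) /\ In (other2 K a) (tverts K) /\
  forall v, In v (tverts K) -> v = a \/ v = other1 K a \/ v = other2 K a.
Proof.
  intros Hs Ha. simpl.
  destruct (other_cases K a Hs Ha) as [[-> [-> ->]]|[[-> [-> ->]]|[-> [-> ->]]]];
    (split; [tauto | split; [tauto|]]); intros v [<-|[<-|[<-|[]]]]; tauto.
Qed.

Lemma cross3_other pt K a : sorted_tri K -> In a (tverts K) ->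
  Rabs (cross3 (pt a) (pt (other1 K a)) (pt (other2 K a))) = Rabs (tdet pt K).
Proof.
  intros Hs Ha. unfold cross3, tdet.
  destruct (other_cases K a Hs Ha) as [[-> [-> ->]]|[[-> [-> ->]]|[-> [-> ->]]]];
    [| rewrite <- Rabs_Ropp |]; f_equal; ring.
Qed.

Lemma cone_point_in_tri pt K a al be : sorted_tri K -> In a (tverts K) ->
  0 <= al -> 0 <= be -> al + be <= 1 ->
  in_tri pt K (cone_point (pt a) (pt (other1 K a)) (pt (other2 K a)) al be).
Proof.
  intros Hs Ha Hal Hbe Hsum. unfold in_tri, cone_point.
  destruct (other_cases K a Hs Ha) as [[-> [-> ->]]|[[-> [-> ->]]|[-> [-> ->]]]].
  - exists (1 - al - be), al, be. repeat split; try lra; f_equal; ring.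
  - exists al, (1 - al - be), be. repeat split; try lra; f_equal; ring.
  - exists al, be, (1 - al - be). repeat split; try lra; f_equal; ring.
Qed.

Lemma sorted_tri_incl_eq (K K' : tri) : sorted_tri K -> sorted_tri K' ->
  (forall v, In v (tverts K) -> In v (tverts K')) -> K = K'.
Proof.
  destruct K as [[x1 x2] x3], K' as [[y1 y2] y3].
  unfold sorted_tri, tverts, tv1, tv2, tv3; simpl. intros [] [] Hincl.
  destruct (Hincl x1), (Hincl x2), (Hincl x3); auto; intuition (subst; f_equal; f_equal; lia).
Qed.

Lemma common_verts_in K K' v : In v (common_verts K K') -> In v (tverts K) /\ In v (tverts K').
Proof.
  unfold common_verts. rewrite filter_In. intros [Hv Hex]. split; auto.
  apply existsb_exists in Hex as [x [Hx E]]. apply Nat.eqb_eq in E. now subst.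
Qed.

Lemma in_hull_affine pt (l : list nat) (c1 c2 c : R) x : in_hull pt l x ->
  (forall v, In v l -> c1 * fst (pt v) + c2 * snd (pt v) = c) -> c1 * fst x + c2 * snd x = c.
Proof.
  intros [lam [_ [Hsum ->]]] Hv. simpl.
  rewrite <- !lsum_scal, <- lsum_plus, <- (Rmult_1_r c), <- Hsum, <- lsum_scal.
  apply lsum_ext. intros i Hi. apply in_seq in Hi.
  rewrite <- (Hv (nth i l 0%nat)) by (apply nth_In; lia). ring.
Qed.

(* The affine function x |-> cross3 (pt a) (pt c) x vanishes on the hull of l
   but not at the cone point. *)
Lemma cone_point_notin_hull pt (l : list nat) a b c al be :
  (forall v, In v l -> v = a \/ v = b \/ v = c) -> ~ In b l ->
  cross3 (pt a) (pt b) (pt c) <> 0 -> al <> 0 ->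
  ~ in_hull pt l (cone_point (pt a) (pt b) (pt c) al be).
Proof.
  intros Hl Hb Hcross Hal Hhull.
  set (c1 := - (snd (pt c) - snd (pt a))). set (c2 := fst (pt c) - fst (pt a)).
  apply (in_hull_affine pt l c1 c2 (c1 * fst (pt a) + c2 * snd (pt a))) in Hhull.
  - unfold cone_point, cross3, c1, c2 in *. simpl in Hhull.
    apply Hcross, (Rmult_eq_reg_l al); [|auto]. lra.
  - intros v Hv. unfold c1, c2.
    destruct (Hl v Hv) as [-> | [-> | ->]]; [ring | contradiction | ring].
Qed.

Lemma cross3_nonzero_dist2_pos (o x y : pt2) : cross3 o x y <> 0 ->
  0 < dist2 x o /\ 0 < dist2 y o.
Proof.
  intros HD. split; apply dist2_pos; intros ->; apply HD; unfold cross3; ring.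
Qed.

Lemma cone_point_swap o x y al be : cone_point o x y al be = cone_point o y x be al.
Proof. unfold cone_point. f_equal; ring. Qed.

Lemma cross3_swap o x y : cross3 o y x = - cross3 o x y.
Proof. unfold cross3. ring. Qed.

(* A point a + eps g close to a lies in both triangles, hence on their common
   face; but the common face cannot reach into the open cone of K at a. *)
Lemma cones_disjoint pt K K' a g : sorted_tri K -> sorted_tri K' -> tdet pt K <> 0 -> K <> K' ->
  (forall x, in_tri pt K x -> in_tri pt K' x -> in_hull pt (common_verts K K') x) ->
  In a (tverts K) -> In a (tverts K') ->
  in_cone (pt a) (pt (other1 K a)) (pt (other2 K a)) g ->
  in_cone (pt a) (pt (other1 K' a)) (pt (other2 K' a)) g -> False.
Proof.
  intros HsK HsK' Hd Hne Hconf Ha Ha' [al [be [Hal [Hbe Hg]]]] [al' [be' [Hal' [Hbe' Hg']]]].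
  set (eps := / (al + be + al' + be')).
  assert (Heps : 0 < eps) by (apply Rinv_0_lt_compat; lra).
  assert (Hsum : eps * (al + be) <= 1 /\ eps * (al' + be') <= 1).
  { unfold eps. split; apply Rmult_le_reg_l with (al + be + al' + be'); try lra;
      rewrite <- Rmult_assoc, Rinv_r; lra. }
  set (y := cone_point (pt a) (pt (other1 K a)) (pt (other2 K a)) (eps * al) (eps * be)).
  assert (Hy : in_tri pt K y) by (apply cone_point_in_tri; auto; nra).
  assert (Hy' : in_tri pt K' y).
  { replace y
      with (cone_point (pt a) (pt (other1 K' a)) (pt (other2 K' a)) (eps * al') (eps * be')).
    - apply cone_point_in_tri; auto; nra.
    - unfold y, cone_point. rewrite Hg in Hg'. injection Hg' as E1 E2. f_equal; nra. }
  pose proof (Hconf y Hy Hy') as Hhull.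
  destruct (other_verts K a HsK Ha) as [_ [_ Hverts]].
  assert (Hcross : cross3 (pt a) (pt (other1 K a)) (pt (other2 K a)) <> 0).
  { intros E. apply (Rabs_no_R0 _ Hd). rewrite <- (cross3_other pt K a), E by auto.
    apply Rabs_R0. }
  assert (Hcommon : forall v, In v (common_verts K K') ->
            v = a \/ v = other1 K a \/ v = other2 K a)
    by (intros v Hv; apply Hverts, (common_verts_in K K' v Hv)).
  destruct (classic (In (other1 K a) (common_verts K K'))) as [Hbc|Hbc].
  - destruct (classic (In (other2 K a) (common_verts K K'))) as [Hcc|Hcc].
    + apply Hne, sorted_tri_incl_eq; auto. intros v Hv.
      destruct (Hverts v Hv) as [-> | [-> | ->]]; auto;
        [apply (common_verts_in K K' _ Hbc) | apply (common_verts_in K K' _ Hcc)].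
    + unfold y in Hhull. rewrite cone_point_swap in Hhull.
      apply cone_point_notin_hull in Hhull; auto.
      * intros v Hv. destruct (Hcommon v Hv) as [|[|]]; auto.
      * rewrite cross3_swap. lra.
      * nra.
  - apply cone_point_notin_hull in Hhull; auto. nra.
Qed.

Lemma Rdiv_pos_of_near (x y c : R) : 0 < c -> Rabs (x - y / c) < Rabs y / c -> 0 < x / y.
Proof.
  intros Hc Hnear.
  assert (Hxy : Rabs (x * c - y) < Rabs y).
  { replace (x * c - y) with ((x - y / c) * c) by (field; lra).
    rewrite Rabs_mult, (Rabs_right c) by lra.
    apply Rmult_lt_compat_r with (r := c) in Hnear; [|lra].
    replace (Rabs y / c * c) with (Rabs y) in Hnear by (field; lra). exact Hnear. }
  assert (Hy : y <> 0)
    by (intros ->; pose proof (Rabs_pos (x * c - 0)); rewrite Rabs_R0 in Hxy; lra).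
  assert (Hpos : 0 < x * c * y).
  { unfold Rabs in Hxy. destruct (Rcase_abs y), (Rcase_abs (x * c - y)); nra. }
  replace (x / y) with (x * c * y / (c * (y * y))) by (field; auto; lra).
  apply Rdiv_lt_0_compat; [lra|]. apply Rmult_lt_0_compat; [lra|].
  pose proof (Rsqr_pos_lt y Hy). unfold Rsqr in *. lra.
Qed.

Lemma abs_fst_le_dist2 x y : Rabs (fst x - fst y) <= dist2 x y.
Proof.
  unfold dist2. rewrite <- sqrt_Rsqr_abs. apply sqrt_le_1_alt. unfold Rsqr.
  pose proof (pow2_ge_0 (snd x - snd y)). nra.
Qed.

Lemma abs_snd_le_dist2 x y : Rabs (snd x - snd y) <= dist2 x y.
Proof.
  unfold dist2. rewrite <- sqrt_Rsqr_abs. apply sqrt_le_1_alt. unfold Rsqr.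
  pose proof (pow2_ge_0 (fst x - fst y)). nra.
Qed.

Lemma Rabs_det2_le (u v w z E F : R) :
  Rabs u <= E -> Rabs w <= E -> Rabs v <= F -> Rabs z <= F -> Rabs (u * v - w * z) <= 2 * E * F.
Proof.
  intros Hu Hw Hv Hz. unfold Rminus. eapply Rle_trans; [apply Rabs_triang|].
  rewrite Rabs_Ropp, !Rabs_mult.
  pose proof (Rabs_pos u). pose proof (Rabs_pos v).
  pose proof (Rabs_pos w). pose proof (Rabs_pos z).
  assert (Rabs u * Rabs v <= E * F) by (apply Rmult_le_compat; lra).
  assert (Rabs w * Rabs z <= E * F) by (apply Rmult_le_compat; lra). lra.
Qed.

(* Cone coordinates of g are cross3-ratios (Cramer); for the bisector direction
   x/|x| + y/|y| they are 1/|x| and 1/|y|, and shape regularity keeps them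
   positive under a perturbation of size 1/(4 s). *)
Lemma in_cone_of_near_bisector (o x y g : pt2) (s : R) : 0 < s -> cross3 o x y <> 0 ->
  dist2 x o * dist2 y o <= s * Rabs (cross3 o x y) ->
  Rabs (fst g - ((fst x - fst o) / dist2 x o + (fst y - fst o) / dist2 y o)) <= / (4 * s) ->
  Rabs (snd g - ((snd x - snd o) / dist2 x o + (snd y - snd o) / dist2 y o)) <= / (4 * s) ->
  in_cone o x y g.
Proof.
  intros Hs HD HPQ He1 He2.
  destruct (cross3_nonzero_dist2_pos o x y HD) as [HP HQ].
  pose proof (abs_fst_le_dist2 x o). pose proof (abs_snd_le_dist2 x o).
  pose proof (abs_fst_le_dist2 y o). pose proof (abs_snd_le_dist2 y o).
  pose proof (Rabs_pos_lt _ HD).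
  unfold cross3 in *.
  set (P := dist2 x o) in *. set (Q := dist2 y o) in *.
  set (p1 := fst x - fst o) in *. set (p2 := snd x - snd o) in *.
  set (q1 := fst y - fst o) in *. set (q2 := snd y - snd o) in *.
  set (D := p1 * q2 - q1 * p2) in *.
  set (e1 := fst g - (p1 / P + q1 / Q)) in *. set (e2 := snd g - (p2 / P + q2 / Q)) in *.
  assert (Hd : 0 < / (4 * s)) by (apply Rinv_0_lt_compat; lra).
  assert (HQs : Q / s <= Rabs D / P).
  { apply Rmult_le_reg_r with (s * P); [nra|].
    replace (Q / s * (s * P)) with (P * Q) by (field; lra).
    replace (Rabs D / P * (s * P)) with (s * Rabs D) by (field; lra). lra. }
  assert (HPs : P / s <= Rabs D / Q).
  { apply Rmult_le_reg_r with (s * Q); [nra|].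
    replace (P / s * (s * Q)) with (P * Q) by (field; lra).
    replace (Rabs D / Q * (s * Q)) with (s * Rabs D) by (field; lra). lra. }
  exists ((fst g * q2 - snd g * q1) / D), ((p1 * snd g - p2 * fst g) / D). split; [|split].
  - apply Rdiv_pos_of_near with P; [lra|].
    replace (fst g * q2 - snd g * q1 - D / P) with (e1 * q2 - e2 * q1)
      by (unfold e1, e2, D; field; lra).
    eapply Rle_lt_trans; [apply Rabs_det2_le with (E := / (4 * s)) (F := Q); auto|].
    replace (2 * / (4 * s) * Q) with (Q / s / 2) by (field; lra).
    assert (0 < Q / s) by (apply Rdiv_lt_0_compat; lra). lra.
  - apply Rdiv_pos_of_near with Q; [lra|].
    replace (p1 * snd g - p2 * fst g - D / Q) with (p1 * e2 - p2 * e1)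
      by (unfold e1, e2, D; field; lra).
    eapply Rle_lt_trans; [apply Rabs_det2_le with (E := P) (F := / (4 * s)); auto|].
    replace (2 * P * / (4 * s)) with (P / s / 2) by (field; lra).
    assert (0 < P / s) by (apply Rdiv_lt_0_compat; lra). lra.
  - apply injective_projections; simpl; fold p1 p2 q1 q2; unfold D; field; exact HD.
Qed.

Definition grid_step (sigma : R) : R := / (4 * sigma).
Definition grid_size (sigma : R) : nat := S (Z.to_nat (up (16 * sigma))).
Definition grid_coord (sigma : R) (i : nat) : R := INR i * grid_step sigma - 2.

Definition grid (sigma : R) : list pt2 :=
  map (fun ij => (grid_coord sigma (fst ij), grid_coord sigma (snd ij)))
    (list_prod (seq 0 (grid_size sigma)) (seq 0 (grid_size sigma))).

Lemma grid_length sigma : length (grid sigma) = (grid_size sigma * grid_size sigma)%nat.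
Proof. unfold grid. rewrite length_map, length_prod, length_seq. reflexivity. Qed.

Lemma grid_coord_near sigma u : 0 < sigma -> -2 <= u <= 2 ->
  exists i, (i < grid_size sigma)%nat /\ Rabs (u - grid_coord sigma i) <= grid_step sigma.
Proof.
  intros Hs Hu. unfold grid_coord. set (d := grid_step sigma).
  assert (Hd : 0 < d) by (apply Rinv_0_lt_compat; lra).
  set (r := (u + 2) / d).
  assert (Hr : 0 <= r <= 16 * sigma).
  { unfold r, d, grid_step, Rdiv. rewrite Rinv_inv. nra. }
  destruct (archimed r) as [Hup1 Hup2]. destruct (archimed (16 * sigma)) as [Hup3 _].
  assert (Hk : (0 <= up r - 1)%Z) by (cut (0 < up r)%Z; [lia | apply lt_IZR; simpl; lra]).
  assert (Hkn : (up r - 1 < up (16 * sigma))%Z) by (apply lt_IZR; rewrite minus_IZR; lra).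
  exists (Z.to_nat (up r - 1)). split; [unfold grid_size; lia|].
  rewrite INR_IZR_INZ, Z2Nat.id, minus_IZR by auto.
  replace (u - ((IZR (up r) - 1) * d - 2)) with ((r - (IZR (up r) - 1)) * d)
    by (unfold r; field; lra).
  rewrite Rabs_mult, !Rabs_right by lra. simpl in *. nra.
Qed.

Lemma grid_near sigma (u : pt2) : 0 < sigma -> Rabs (fst u) <= 2 -> Rabs (snd u) <= 2 ->
  exists g, In g (grid sigma) /\
    Rabs (fst g - fst u) <= grid_step sigma /\ Rabs (snd g - snd u) <= grid_step sigma.
Proof.
  intros Hs H1 H2.
  assert (Habs : forall t, Rabs t <= 2 -> -2 <= t <= 2)
    by (intros t; unfold Rabs; destruct (Rcase_abs t); lra).
  apply Habs in H1, H2.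
  destruct (grid_coord_near sigma (fst u) Hs H1) as [i [Hi Hei]].
  destruct (grid_coord_near sigma (snd u) Hs H2) as [j [Hj Hej]].
  exists (grid_coord sigma i, grid_coord sigma j). split.
  - apply (in_map (fun ij => (grid_coord sigma (fst ij), grid_coord sigma (snd ij))) _ (i, j)).
    apply in_prod; apply in_seq; lia.
  - simpl. rewrite !(Rabs_minus_sym (grid_coord _ _)). auto.
Qed.

Lemma grid_meets_cone sigma pt K a : sorted_tri K -> tdet pt K <> 0 ->
  tdiam pt K <= sigma * tinradius pt K -> In a (tverts K) ->
  exists g, In g (grid sigma) /\ in_cone (pt a) (pt (other1 K a)) (pt (other2 K a)) g.
Proof.
  intros Hs Hd Hsr Ha.
  destruct (diam_sq_le_area sigma pt K Hd Hsr) as [Hdiam Hsig].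
  destruct (other_verts K a Hs Ha) as [Hb [Hc _]].
  pose proof (cross3_other pt K a Hs Ha) as Hcross.
  set (o := pt a) in *. set (x := pt (other1 K a)) in *. set (y := pt (other2 K a)) in *.
  assert (HD : cross3 o x y <> 0)
    by (intros E; rewrite E, Rabs_R0 in Hcross; symmetry in Hcross; revert Hcross;
        apply Rabs_no_R0, Hd).
  destruct (cross3_nonzero_dist2_pos o x y HD) as [HP HQ].
  assert (HPd : dist2 x o <= tdiam pt K) by (apply (elen_le_diam pt K); auto).
  assert (HQd : dist2 y o <= tdiam pt K) by (apply (elen_le_diam pt K); auto).
  assert (Hunit : forall t r, 0 < r -> Rabs t <= r -> Rabs (t / r) <= 1).
  { intros t r Hr Ht. unfold Rdiv. rewrite Rabs_mult, Rabs_inv, (Rabs_right r) by lra.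
    apply Rmult_le_reg_r with r; [lra|]. rewrite Rmult_assoc, Rinv_l; lra. }
  destruct (grid_near sigma ((fst x - fst o) / dist2 x o + (fst y - fst o) / dist2 y o,
                             (snd x - snd o) / dist2 x o + (snd y - snd o) / dist2 y o))
    as [g [Hg [Hg1 Hg2]]]; auto; simpl.
  1, 2: eapply Rle_trans; [apply Rabs_triang|]; apply Rplus_le_compat; apply Hunit; auto;
    apply abs_fst_le_dist2 || apply abs_snd_le_dist2.
  exists g. split; auto. apply in_cone_of_near_bisector with sigma; auto.
  rewrite Hcross. unfold tarea in Hdiam. nra.
Qed.

Lemma count_tverts N K : lsum (fun j => ind (In j (tverts K))) (seq 0 N) <= 3.
Proof.
  replace 3 with (INR (length (tverts K))) by (simpl; lra).
  apply (lsum_ind_pigeonhole _ eq); [apply seq_NoDup | eauto | congruence].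
Qed.

Lemma in_S_edge pt tris Om a j : in_S pt tris Om a j ->
  exists K, In K tris /\ In a (tverts K) /\ In j (tverts K).
Proof. intros [_ [[_ [[_ [K HK]] _]] | [_ [[_ [K HK]] _]]]]; exists K; tauto. Qed.

Definition valence_bound (sigma : R) : R := INR (grid_size sigma * grid_size sigma).

Lemma valence_bound_ge_1 sigma : 1 <= valence_bound sigma.
Proof. apply (le_INR 1). unfold grid_size. lia. Qed.

Section Mesh.
Variables (sigma : R) (N : nat) (pt : nat -> pt2) (tris : list tri) (Om : pt2 -> Prop).
Hypothesis Hwf : forall t, In t tris -> sorted_tri t /\ tdet pt t <> 0 /\ (tv3 t < N)%nat.
Hypothesis Hnd : NoDup tris.
Hypothesis Hconf : forall t t' x, In t tris -> In t' tris -> t <> t' ->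
  in_tri pt t x -> in_tri pt t' x -> in_hull pt (common_verts t t') x.
Hypothesis Hsr : shape_regular sigma pt tris.

Lemma valence_le a : lsum (fun K => ind (In a (tverts K))) tris <= valence_bound sigma.
Proof.
  unfold valence_bound. rewrite <- grid_length.
  apply (lsum_ind_pigeonhole _ (fun K g => in_cone (pt a) (pt (other1 K a)) (pt (other2 K a)) g));
    auto.
  - intros K HK Ha. destruct (Hwf K HK) as [Hs [Hd _]]. apply grid_meets_cone; auto.
  - intros K K' g HK HK' Ha Ha' Hg Hg'. destruct (classic (K = K')) as [|Hne]; auto.
    destruct (Hwf K HK) as [Hs [Hd _]]. destruct (Hwf K' HK') as [Hs' _].
    exfalso. apply (cones_disjoint pt K K' a g); auto.
Qed.

Lemma star_size_le a :
  lsum (fun j => ind (in_S pt tris Om a j)) (seq 0 N) <= 3 * valence_bound sigma.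
Proof.
  apply Rle_trans with
    (lsum (fun j => lsum (fun K => ind (In a (tverts K)) * ind (In j (tverts K))) tris) (seq 0 N)).
  - apply lsum_le. intros j _.
    assert (Hnn : forall K, 0 <= ind (In a (tverts K)) * ind (In j (tverts K)))
      by (intros K; pose proof (ind_bounds (In a (tverts K)));
          pose proof (ind_bounds (In j (tverts K))); nra).
    destruct (classic (in_S pt tris Om a j)) as [HS|HS].
    + destruct (in_S_edge pt tris Om a j HS) as [K [HK [Ha Hj]]].
      rewrite ind_true by auto. replace 1 with (ind (In a (tverts K)) * ind (In j (tverts K)))
        by (rewrite !ind_true; auto; ring).
      apply (lsum_ge_term (fun K => ind (In a (tverts K)) * ind (In j (tverts K)))); auto.
    + rewrite ind_false by auto. apply lsum_nonneg. auto.
  - rewrite lsum_comm.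
    apply Rle_trans with (lsum (fun K => 3 * ind (In a (tverts K))) tris).
    + apply lsum_le. intros K _. rewrite lsum_scal, Rmult_comm.
      apply Rmult_le_compat_r; [apply ind_bounds | apply count_tverts].
    + rewrite lsum_scal. pose proof (valence_le a). lra.
Qed.

Lemma pair_count_le K (c : R) : 0 <= c ->
  lsum (fun a => lsum (fun b => ind (In a (tverts K)) * ind (In b (tverts K)) * c) (seq 0 N))
    (seq 0 N) <= 9 * c.
Proof.
  intros Hc.
  rewrite (lsum_ext _ (fun a => (c * lsum (fun b => ind (In b (tverts K))) (seq 0 N))
                                 * ind (In a (tverts K)))).
  2:{ intros a _. rewrite <- lsum_scal, Rmult_comm, <- lsum_scal. apply lsum_ext.
      intros b _. ring. }
  rewrite lsum_scal. pose proof (count_tverts N K).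
  set (n := lsum (fun b => ind (In b (tverts K))) (seq 0 N)) in *.
  assert (0 <= n) by (apply lsum_nonneg; intros; apply ind_bounds).
  assert (n * n <= 9) by nra.
  replace (c * n * n) with (c * (n * n)) by ring. nra.
Qed.

Lemma sum_star_sq_le_energy (y : nat -> R) :
  lsum (fun a => lsum (fun b => ind (in_S pt tris Om a b) * (y b - y a) ^ 2) (seq 0 N)) (seq 0 N)
  <= 18 * sigma * lsum (grad_energy pt y) tris.
Proof.
  set (F K := 2 * sigma * grad_energy pt y K).
  assert (HF : forall K, In K tris -> 0 <= F K).
  { intros K HK. destruct (Hwf K HK) as [_ [Hd _]].
    destruct (diam_sq_le_area sigma pt K Hd (Hsr K HK)) as [_ Hs].
    pose proof (grad_energy_nonneg pt y K). unfold F. nra. }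
  set (T a b K := ind (In a (tverts K)) * ind (In b (tverts K)) * F K).
  assert (HT : forall a b K, In K tris -> 0 <= T a b K).
  { intros a b K HK. pose proof (HF K HK). unfold T.
    pose proof (ind_bounds (In a (tverts K))). pose proof (ind_bounds (In b (tverts K))).
    apply Rmult_le_pos; nra. }
  apply Rle_trans with (lsum (fun a => lsum (fun b => lsum (T a b) tris) (seq 0 N)) (seq 0 N)).
  - apply lsum_le. intros a _. apply lsum_le. intros b _.
    destruct (classic (in_S pt tris Om a b)) as [HS|HS].
    + destruct (in_S_edge pt tris Om a b HS) as [K [HK [Ha Hb]]].
      destruct (Hwf K HK) as [_ [Hd _]].
      rewrite ind_true, Rmult_1_l by auto.
      apply Rle_trans with (T a b K).
      * unfold T. rewrite !ind_true by auto. rewrite !Rmult_1_l.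
        apply edge_diff_sq_le_energy; auto.
      * apply lsum_ge_term; auto.
    + rewrite ind_false, Rmult_0_l by auto. apply lsum_nonneg; auto.
  - rewrite (lsum_ext _ (fun a => lsum (fun K => lsum (fun b => T a b K) (seq 0 N)) tris))
      by (intros; apply lsum_comm).
    replace (18 * sigma * lsum (grad_energy pt y) tris) with (lsum (fun K => 9 * F K) tris)
      by (rewrite lsum_scal; unfold F; rewrite lsum_scal; ring).
    rewrite lsum_comm. apply lsum_le. intros K HK. apply pair_count_le; auto.
Qed.

Lemma sum_star_var_sq_le (y : nat -> R) :
  nsum N (fun a => star_var N pt tris Om y a ^ 2)
  <= 54 * sigma * valence_bound sigma * lsum (grad_energy pt y) tris.
Proof.
  apply Rle_trans with (nsum N (fun a => 3 * valence_bound sigma *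
    lsum (fun b => ind (in_S pt tris Om a b) * (y b - y a) ^ 2) (seq 0 N))).
  - apply lsum_le. intros a _. unfold star_var, nsum.
    rewrite (lsum_ext _ (fun b => ind (in_S pt tris Om a b)
                                  * (ind (in_S pt tris Om a b) * Rabs (y a - y b))))
      by (intros; rewrite <- Rmult_assoc, ind_idem; reflexivity).
    eapply Rle_trans; [apply lsum_Cauchy_Schwarz|].
    rewrite (lsum_ext (fun b => ind (in_S pt tris Om a b) ^ 2) (fun b => ind (in_S pt tris Om a b)))
      by (intros; apply ind_sq).
    rewrite (lsum_ext (fun b => (ind (in_S pt tris Om a b) * Rabs (y a - y b)) ^ 2)
                      (fun b => ind (in_S pt tris Om a b) * (y b - y a) ^ 2)).
    2:{ intros b _. rewrite Rpow_mult_distr, pow2_abs, ind_sq. f_equal. ring. }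
    apply Rmult_le_compat_r; [|apply star_size_le; auto].
    apply lsum_nonneg. intros b _.
    apply Rmult_le_pos; [apply ind_bounds | apply pow2_ge_0].
  - unfold nsum. rewrite lsum_scal.
    replace (54 * sigma * valence_bound sigma * lsum (grad_energy pt y) tris)
      with (3 * valence_bound sigma * (18 * sigma * lsum (grad_energy pt y) tris)) by ring.
    apply Rmult_le_compat_l; [pose proof (valence_bound_ge_1 sigma); lra|].
    apply sum_star_sq_le_energy.
Qed.

End Mesh.

(** * The Lipschitz estimate *)

Lemma ind_interior_edge_le pt tris Om a b :
  ind (interior_edge pt tris Om a b) + ind (interior_edge pt tris Om b a)
  <= ind (in_S pt tris Om a b).
Proof.
  assert (HS : interior_edge pt tris Om a b \/ interior_edge pt tris Om b a ->
               in_S pt tris Om a b)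
    by (intros Hedge; split; [destruct Hedge as [[? _] | [? _]]; lia | exact Hedge]).
  pose proof (ind_bounds (in_S pt tris Om a b)).
  destruct (classic (interior_edge pt tris Om a b)) as [Hab|Hab];
  destruct (classic (interior_edge pt tris Om b a)) as [Hba|Hba].
  - destruct Hab as [? _], Hba as [? _]. lia.
  - rewrite ind_true, (ind_false (interior_edge _ _ _ b a)), (ind_true (in_S _ _ _ a b)); auto.
    lra.
  - rewrite ind_false, (ind_true (interior_edge _ _ _ b a)), (ind_true (in_S _ _ _ a b)); auto.
    lra.
  - rewrite !ind_false by auto. lra.
Qed.

(* Each interior edge is seen from both of its endpoints. *)
Lemma edge_sum_le_star_sum N pt tris Om (eps z : nat -> R) : (forall a, 0 <= eps a) ->
  nsum N (fun a => nsum N (fun b =>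
    ind (interior_edge pt tris Om a b) * ((eps a + eps b) * Rabs (z b - z a))))
  <= nsum N (fun a => eps a * star_var N pt tris Om z a).
Proof.
  intros Heps. unfold nsum, star_var, nsum.
  rewrite (lsum_ext _ (fun a =>
      lsum (fun b => ind (interior_edge pt tris Om a b) * eps a * Rabs (z b - z a)) (seq 0 N)
    + lsum (fun b => ind (interior_edge pt tris Om a b) * eps b * Rabs (z b - z a)) (seq 0 N))).
  2:{ intros a _. rewrite <- lsum_plus. apply lsum_ext. intros. ring. }
  rewrite lsum_plus,
    (lsum_comm (fun a b => ind (interior_edge pt tris Om a b) * eps b * Rabs (z b - z a))),
    <- lsum_plus.
  apply lsum_le. intros a _. rewrite <- lsum_plus, <- lsum_scal.
  apply lsum_le. intros b _.
  pose proof (ind_interior_edge_le pt tris Om a b).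
  assert (0 <= eps a * Rabs (z b - z a)) by (apply Rmult_le_pos; [auto | apply Rabs_pos]).
  rewrite (Rabs_minus_sym (z a)). nra.
Qed.

Section DhLipschitz.
Variables (sigma p gamma0 : R) (N : nat) (pt : nat -> pt2) (tris : list tri) (Om : pt2 -> Prop).
Hypothesis Hp : 1 <= p.
Hypothesis Hg : 0 < gamma0.
Hypothesis Hwf : forall t, In t tris -> sorted_tri t /\ tdet pt t <> 0 /\ (tv3 t < N)%nat.
Hypothesis Hinj : forall i j, (i < N)%nat -> (j < N)%nat -> pt i = pt j -> i = j.
Hypothesis Hnd : NoDup tris.
Hypothesis Hconf : forall t t' x, In t tris -> In t' tris -> t <> t' ->
  in_tri pt t x -> in_tri pt t' x -> in_hull pt (common_verts t t') x.
Hypothesis Hsr : shape_regular sigma pt tris.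
Hypothesis Hsig : 0 < sigma.

Lemma interior_edge_facts a b : interior_edge pt tris Om a b ->
  (a < N)%nat /\ (b < N)%nat /\ in_S pt tris Om a b /\ in_S pt tris Om b a /\
  0 < elen pt a b <= hmax pt tris.
Proof.
  intros HIE. pose proof HIE as [Hab [[Hne [K [HK [Ha Hb]]]] _]].
  destruct (Hwf K HK) as [[H12 H23] [_ HN]].
  assert (Hvert : forall v, In v (tverts K) -> (v < N)%nat)
    by (intros v [<-|[<-|[<-|[]]]]; unfold tv1, tv2, tv3 in *; lia).
  pose proof (Hvert a Ha). pose proof (Hvert b Hb).
  repeat split; auto; try lia.
  - apply dist2_pos. intros E. apply Hinj in E; auto.
  - eapply Rle_trans; [apply (elen_le_diam pt K a b Ha Hb) | apply hmax_ge, HK].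
Qed.

Lemma edge_term_lipschitz v w z a b : interior_edge pt tris Om a b ->
  Rabs (gamma0 * elen pt a b ^ 2 * alphaE N pt tris Om p v a b * edge_int pt v z a b
        - gamma0 * elen pt a b ^ 2 * alphaE N pt tris Om p w a b * edge_int pt w z a b)
  <= gamma0 * hmax pt tris * (2 * p + 1)
     * ((star_var N pt tris Om (fun i => v i - w i) a
         + star_var N pt tris Om (fun i => v i - w i) b) * Rabs (z b - z a)).
Proof.
  intros HIE. destruct (interior_edge_facts a b HIE) as [Ha [Hb [Hab [Hba [HE HEh]]]]].
  pose proof (alphaE_lipschitz N pt tris Om p Hp v w a b Ha Hb Hab Hba) as Halpha.
  set (Gv := alphaE N pt tris Om p v a b * (v b - v a)) in *.
  set (Gw := alphaE N pt tris Om p w a b * (w b - w a)) in *.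
  set (ev := star_var N pt tris Om (fun i => v i - w i) a
             + star_var N pt tris Om (fun i => v i - w i) b) in *.
  replace (gamma0 * elen pt a b ^ 2 * alphaE N pt tris Om p v a b * edge_int pt v z a b
           - gamma0 * elen pt a b ^ 2 * alphaE N pt tris Om p w a b * edge_int pt w z a b)
    with ((gamma0 * elen pt a b) * ((Gv - Gw) * (z b - z a)))
    by (unfold Gv, Gw, edge_int; field; lra).
  rewrite Rabs_mult, (Rabs_right (gamma0 * elen pt a b)), Rabs_mult by nra.
  pose proof (Rabs_pos (Gv - Gw)). pose proof (Rabs_pos (z b - z a)).
  replace (gamma0 * hmax pt tris * (2 * p + 1) * (ev * Rabs (z b - z a)))
    with ((gamma0 * hmax pt tris) * ((2 * p + 1) * ev * Rabs (z b - z a))) by ring.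
  apply Rmult_le_compat; nra.
Qed.

Lemma d_h_diff_le_star_sum v w z :
  Rabs (d_h N pt tris Om p gamma0 v v z - d_h N pt tris Om p gamma0 w w z)
  <= gamma0 * hmax pt tris * (2 * p + 1)
     * nsum N (fun a => star_var N pt tris Om (fun i => v i - w i) a
                        * star_var N pt tris Om z a).
Proof.
  set (eps := star_var N pt tris Om (fun i => v i - w i)).
  pose proof (hmax_nonneg pt tris).
  assert (0 <= gamma0 * hmax pt tris * (2 * p + 1)) by (apply Rmult_le_pos; nra).
  eapply Rle_trans; [|apply Rmult_le_compat_l; [auto | apply edge_sum_le_star_sum]].
  2:{ intros; apply star_var_nonneg. }
  unfold d_h, nsum. rewrite <- lsum_minus, <- lsum_scal.
  eapply Rle_trans; [apply lsum_abs|]. apply lsum_le. intros a _.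
  rewrite <- lsum_minus, <- lsum_scal.
  eapply Rle_trans; [apply lsum_abs|]. apply lsum_le. intros b _.
  destruct (cdecP (interior_edge pt tris Om a b)) as [HIE|HIE].
  - rewrite ind_true, Rmult_1_l by auto. apply edge_term_lipschitz, HIE.
  - rewrite ind_false, Rminus_0_r, Rabs_R0 by auto. lra.
Qed.

Lemma sqrt_sum_star_var_sq_le y :
  sqrt (nsum N (fun a => star_var N pt tris Om y a ^ 2))
  <= sqrt (54 * sigma * valence_bound sigma) * h1semi pt tris y.
Proof.
  unfold h1semi. rewrite <- sqrt_mult_alt.
  - apply sqrt_le_1_alt. apply sum_star_var_sq_le; auto.
  - pose proof (valence_bound_ge_1 sigma). nra.
Qed.

Lemma d_h_lipschitz v w z :
  Rabs (d_h N pt tris Om p gamma0 v v z - d_h N pt tris Om p gamma0 w w z)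
  <= (2 * p + 1) * (54 * sigma * valence_bound sigma) * gamma0 * hmax pt tris
     * h1semi pt tris (fun i => v i - w i) * h1semi pt tris z.
Proof.
  pose proof (sqrt_sum_star_var_sq_le (fun i => v i - w i)) as Hvw.
  pose proof (sqrt_sum_star_var_sq_le z) as Hz.
  assert (Hc : 0 <= 54 * sigma * valence_bound sigma)
    by (pose proof (valence_bound_ge_1 sigma); nra).
  pose proof (sqrt_sqrt _ Hc) as Hsq.
  assert (Hfactor : 0 <= gamma0 * hmax pt tris * (2 * p + 1))
    by (pose proof (hmax_nonneg pt tris); apply Rmult_le_pos; nra).
  eapply Rle_trans; [apply d_h_diff_le_star_sum|].
  eapply Rle_trans;
    [apply Rmult_le_compat_l; [exact Hfactor | apply lsum_Cauchy_Schwarz_sqrt]|].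
  eapply Rle_trans;
    [apply Rmult_le_compat_l; [exact Hfactor | apply Rmult_le_compat; try apply sqrt_pos]|];
    [exact Hvw | exact Hz |].
  rewrite <- Hsq at 3. apply Req_le. ring.
Qed.

End DhLipschitz.

Lemma tinradius_nonneg pt K : 0 <= tinradius pt K.
Proof.
  unfold tinradius, tarea, elen.
  pose proof (Rabs_pos (tdet pt K)).
  pose proof (dist2_nonneg (pt (tv1 K)) (pt (tv2 K))).
  pose proof (dist2_nonneg (pt (tv2 K)) (pt (tv3 K))).
  pose proof (dist2_nonneg (pt (tv1 K)) (pt (tv3 K))).
  set (P := dist2 (pt (tv1 K)) (pt (tv2 K)) + _ + _).
  destruct (Req_dec P 0) as [->|HP].
  - unfold Rdiv. rewrite Rinv_0. lra.
  - apply Rle_mult_inv_pos; unfold P in *; lra.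
Qed.

Lemma shape_regular_weaken sigma sigma' pt tris : sigma <= sigma' ->
  shape_regular sigma pt tris -> shape_regular sigma' pt tris.
Proof.
  intros Hle Hsr K HK. eapply Rle_trans; [apply Hsr, HK|].
  apply Rmult_le_compat_r; [apply tinradius_nonneg | exact Hle].
Qed.

Theorem lemma2p2 :
  forall sigma p : R, 1 <= p ->
  exists Clip : R, 0 < Clip /\
    forall (N : nat) (pt : nat -> pt2) (tris : list tri) (Om : pt2 -> Prop),
      conforming_triangulation N pt tris Om ->
      shape_regular sigma pt tris ->
      forall (gamma0 : R), 0 < gamma0 ->
      forall v w z : nat -> R,
        Rabs (d_h N pt tris Om p gamma0 v v z - d_h N pt tris Om p gamma0 w w z)
        <= Clip * gamma0 * hmax pt tris
           * h1semi pt tris (fun i => v i - w i) * h1semi pt tris z.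
Proof.
  intros sigma p Hp.
  set (s := Rmax sigma 1).
  assert (Hs : 1 <= s) by apply Rmax_r.
  exists ((2 * p + 1) * (54 * s * valence_bound s)). split.
  { pose proof (valence_bound_ge_1 s). apply Rmult_lt_0_compat; nra. }
  intros N pt tris Om HC Hsr gamma0 Hg v w z.
  destruct HC as [_ [_ [_ [_ [Htri [Hnd [Hinj [_ [_ Hconf]]]]]]]]].
  apply d_h_lipschitz; auto; try lra.
  - intros t Ht. destruct (Htri t Ht) as [H12 [H23 [HN Hd]]]. repeat split; auto.
  - apply shape_regular_weaken with sigma; [apply Rmax_l | exact Hsr].
Qed.
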